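(* For any finite graph $G$ and any $\varepsilon>0$, the convexity space $\mathcal{C}(G)$ has weak $\varepsilon$-nets of size at most $(480/\varepsilon)^{8\nu_{\mathrm{bi}}(G)\log(1/\varepsilon)}$. In other words, for any set system $\mathcal{G}\subseteq\mathcal{C}(G)$, $$\tau(\mathcal{G})\le (480\,\tau^*(\mathcal{G}))^{8\nu_{\mathrm{bi}}(G)\log\tau^*(\mathcal{G})}.$$
   Context: Let $X=\mathrm{MIS}(G)$ be the set of maximal independent sets of $G$; for $S\subseteq V(G)$ let $K_S=\{I\in X: S\subseteq I\}$; $\mathcal{C}(G)=\{K_S: S\subseteq V(G)\}$. Given a finitely supported probability measure $\mu$ on $X$, a set $N\subseteq X$ is a weak $\varepsilon$-net for $\mathcal{C}(G)$ with respect to $\mu$ if $N\cap C\ne\emptyset$ for every $C\in\mathcal{C}(G)$ with $\mu(C)\ge\varepsilon$; $\mathcal{C}(G)$ has weak $\varepsilon$-nets of size $m$ if for every finitely supported probability measure $\mu$ on $X$ there is such a net of size at most $m$. $\tau(\mathcal{G})$ is the minimum size of a set $T\subseteq X$ meeting every member of $\mathcal{G}$; $\tau^*(\mathcal{G})$ is the minimum of $\sum_{x\in X}f(x)$ over functions $f:X\to[0,1]$ with $\sum_{x\in A}f(x)\ge1$ for all $A\in\mathcal{G}$. $\nu_{\mathrm{bi}}(G)$ is the largest $t$ such that $G$ has $2t$ distinct vertices $u_1,\dots,u_t,v_1,\dots,v_t$ with $u_iv_j\in E(G)$ iff $i=j$. Logarithms are natural. *)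

From HB Require Import structures.
From mathcomp Require Import all_boot all_order all_algebra.
From mathcomp Require Import all_classical all_reals all_analysis.
Set Implicit Arguments. Unset Strict Implicit. Unset Printing Implicit Defensive.
Import Order.TTheory GRing.Theory Num.Theory.
Local Open Scope ring_scope.

Section Defs.
Variables (V : finType) (e : rel V).

Definition independent (I : {set V}) : bool :=
  [forall x in I, forall y in I, ~~ e x y].

Definition MIS : {set {set V}} := [set I | maxset independent I].

Definition KS (S : {set V}) : {set {set V}} := [set I in MIS | S \subset I].

Definition CG : {set {set {set V}}} := [set KS S | S : {set V}].

Definition has_bi_matching (t : nat) : bool :=
  [exists u : {ffun 'I_t -> V}, exists v : {ffun 'I_t -> V},
     [&& injectiveb u, injectiveb v,
         [forall i, forall j, u i != v j] &
         [forall i, forall j, e (u i) (v j) == (i == j)]]].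

(* nu_bi(G): the largest such t (t <= |V| automatically). *)
Definition nu_bi : nat := \max_(t < #|V|.+1 | has_bi_matching t) t.

(* tau(F): minimum size of T subset X meeting every member of F
   (only meaningful when every member is nonempty, then X itself works). *)
Definition hitting (F : {set {set {set V}}}) (T : {set {set V}}) : bool :=
  (T \subset MIS) && [forall A in F, T :&: A != finset.set0].

Definition tauG (F : {set {set {set V}}}) : nat :=
  \big[minn/#|MIS|]_(T : {set {set V}} | hitting F T) #|T|.

Variable R : realType.

(* Fractional covers f : X -> [0,1]; values outside X are irrelevant. *)
Definition frac_cover (F : {set {set {set V}}}) (f : {set V} -> R) : Prop :=
  (forall x, 0 <= f x <= 1) /\ (forall A, A \in F -> 1 <= \sum_(x in A) f x).

Definition tau_starG (F : {set {set {set V}}}) : R :=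
  inf [set t : R | exists f, frac_cover F f /\ t = \sum_(x in MIS) f x].

Definition prob_on_MIS (mu : {set V} -> R) : Prop :=
  (forall I, 0 <= mu I) /\ (forall I, I \notin MIS -> mu I = 0) /\
  \sum_(I in MIS) mu I = 1.

Definition measure_of (mu : {set V} -> R) (C : {set {set V}}) : R :=
  \sum_(I in C) mu I.

Definition weak_net (mu : {set V} -> R) (eps : R) (N : {set {set V}}) : Prop :=
  N \subset MIS /\
  forall C, C \in CG -> eps <= measure_of mu C -> N :&: C != finset.set0.

Definition has_weak_nets (eps m : R) : Prop :=
  forall mu, prob_on_MIS mu ->
    exists N, weak_net mu eps N /\ (#|N|%:R <= m).

End Defs.

(* Let Q be a maximum packing (pairwise disjoint subfamily) of F; weighing its
   members shows |Q| <= tau*(F), and |Q| <= 1/eps for the eps-heavy sets.  Every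
   member of F meets a member of Q.  Pairwise intersecting sets K_S have a common
   maximal independent set (the union of their cores is independent), so the
   members meeting a single q in Q are hit by one point for each q.  Two disjoint
   members of Q have an edge st between their cores, and every member meeting
   both has its core outside the closed neighbourhoods of s and t; there, each
   bi-induced matching extends by st, so induction on nu_bi gives
   tau(F) <= |Q| + |Q|^2 tau' <= (2 |Q|^2)^nu_bi, well below the claimed bound. *)

From HB Require Import structures.
From mathcomp Require Import all_boot all_order all_algebra.
From mathcomp Require Import all_classical all_reals all_analysis.
From mathcomp Require Import zify lra.
Import mathcomp.boot.fintype mathcomp.boot.finset.
Set Implicit Arguments. Unset Strict Implicit. Unset Printing Implicit Defensive.
Import Order.TTheory GRing.Theory Num.Theory.

Section MaximalIndependentSets.
Variables (V : finType) (e : rel V).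
Hypotheses (e_sym : symmetric e) (e_irr : irreflexive e).

Local Notation family := {set {set {set V}}}.
Implicit Types (S U I : {set V}) (M : {set V * V}) (C D N q : {set {set V}}) (F Q : family).

Lemma independentP (I : {set V}) :
  reflect {in I &, forall x y, ~~ e x y} (independent e I).
Proof.
apply: (iffP forall_inP) => [indI x y xI | indI x xI]; first exact: (forall_inP (indI x xI)).
by apply/forall_inP => y; apply: indI.
Qed.

Lemma MIS_independent I : I \in MIS e -> independent e I.
Proof. by rewrite inE => /maxsetP[]. Qed.

Lemma MIS_no_edge I : I \in MIS e -> {in I &, forall x y, ~~ e x y}.
Proof. by move/MIS_independent/independentP. Qed.

Lemma independent_sub_MIS S : independent e S -> exists2 I, I \in MIS e & S \subset I.
Proof. by case/maxset_exists => I maxI SI; exists I; rewrite ?inE. Qed.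

Definition core (C : {set {set V}}) : {set V} := \bigcap_(I in C) I.

Lemma core_sub C I : I \in C -> core C \subset I.
Proof. exact: bigcap_inf. Qed.

Lemma CG_KS_core C : C \in CG e -> C = KS e (core C).
Proof.
case/imsetP => S _ ->; apply/setP => I; apply/idP/setIdP => [KI | [MI coreI]].
  by split; [case/setIdP: KI | apply: core_sub].
apply/setIdP; split=> //; apply: subset_trans coreI.
by apply/bigcapsP => J /setIdP[].
Qed.

Lemma CG_sub_MIS C : C \in CG e -> C \subset MIS e.
Proof. by case/imsetP => S _ ->; apply/subsetP => I; rewrite inE => /andP[]. Qed.

(* The nonempty members of C(G) whose core, the largest S with C = K_S, lies in U. *)
Definition supported_in (U : {set V}) (F : family) : Prop :=
  forall C, C \in F -> [/\ C != set0, C = KS e (core C) & core C \subset U].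

Lemma supported_in_CG F : F \subset CG e -> set0 \notin F -> supported_in setT F.
Proof.
move=> /subsetP FCG F0 C FC; split; last exact: subsetT.
- by apply: contraNneq F0 => <-.
- exact/CG_KS_core/FCG.
Qed.

Lemma supported_sub U F F' : F' \subset F -> supported_in U F -> supported_in U F'.
Proof. by move=> /subsetP F'F suppF C /F'F; apply: suppF. Qed.

Definition closed_nbhd (x : V) : {set V} := x |: [set y | e x y].

Definition meets_both F q q' : family :=
  [set C in F | (C :&: q != set0) && (C :&: q' != set0)].

Section Supported.
Variables (U : {set V}) (F : family).
Hypothesis suppF : supported_in U F.

Lemma supported_mem C I : C \in F -> (I \in C) = (I \in MIS e) && (core C \subset I).
Proof. by move=> FC; case: (suppF FC) => _ CK _; rewrite [in LHS]CK inE. Qed.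

Lemma supported_MIS C I : C \in F -> I \in C -> I \in MIS e.
Proof. by move=> FC; rewrite supported_mem // => /andP[]. Qed.

Lemma supported_core_no_edge C : C \in F -> {in core C &, forall x y, ~~ e x y}.
Proof.
move=> FC; case: (suppF FC) => /set0Pn[I CI] _ _.
move=> x y /(subsetP (core_sub CI)) xI /(subsetP (core_sub CI)) yI.
exact: MIS_no_edge (supported_MIS FC CI) x y xI yI.
Qed.

Lemma meeting_family_hit1 :
  {in F &, forall C D, C :&: D != set0} -> exists2 N, hitting e F N & #|N| <= 1.
Proof.
move=> meetF; pose S := \bigcup_(C in F) core C.
have indS : independent e S.
  apply/independentP => x y /bigcupP[C FC xC] /bigcupP[D FD yD].
  have /set0Pn[I /setIP[CI DI]] := meetF C D FC FD.
  apply: (MIS_no_edge (supported_MIS FC CI)).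
  - exact: subsetP (core_sub CI) x xC.
  - exact: subsetP (core_sub DI) y yD.
have [I MI SI] := independent_sub_MIS indS.
exists [set I]; last by rewrite cards1.
rewrite /hitting sub1set MI; apply/forall_inP => C FC; apply/set0Pn; exists I.
rewrite inE set11 (supported_mem _ FC) MI.
exact: subset_trans (bigcup_sup C FC) SI.
Qed.

(* Otherwise the union of the two cores would extend to a common MIS. *)
Lemma disjoint_cores_edge C D : C \in F -> D \in F -> C :&: D = set0 ->
  exists s t, [/\ s \in core C, t \in core D & e s t].
Proof.
move=> FC FD CD.
have [/existsP[s /existsP[t /and3P[sC tD est]]] | noedge] :=
  boolP [exists s, exists t, [&& s \in core C, t \in core D & e s t]].
  by exists s, t.
have indCD : independent e (core C :|: core D).
  apply/independentP => x y /setUP[xC | xD] /setUP[yC | yD].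
  - exact: supported_core_no_edge FC x y xC yC.
  - by apply: contra noedge => exy; apply/existsP; exists x; apply/existsP; exists y; apply/and3P.
  - by apply: contra noedge => exy; apply/existsP; exists y; apply/existsP; exists x;
      rewrite yC xD e_sym.
  - exact: supported_core_no_edge FD x y xD yD.
have [I MI CDI] := independent_sub_MIS indCD.
have /setP/(_ I) := CD; rewrite inE in_set0 (supported_mem I FC) (supported_mem I FD) MI.
by rewrite (subset_trans (subsetUl _ _) CDI) (subset_trans (subsetUr _ _) CDI).
Qed.

Lemma core_avoids_edge C q q' s t : C \in F ->
    C :&: q != set0 -> C :&: q' != set0 -> s \in core q -> t \in core q' -> e s t ->
  core C \subset U :\: (closed_nbhd s :|: closed_nbhd t).
Proof.
move=> FC /set0Pn[I /setIP[CI qI]] /set0Pn[J /setIP[CJ q'J]] sq tq' est.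
have noI := MIS_no_edge (supported_MIS FC CI).
have noJ := MIS_no_edge (supported_MIS FC CJ).
have sI : s \in I := subsetP (core_sub qI) s sq.
have tJ : t \in J := subsetP (core_sub q'J) t tq'.
have [_ _ /subsetP CU] := suppF FC.
apply/subsetP => x xC; have xI := subsetP (core_sub CI) x xC.
have xJ := subsetP (core_sub CJ) x xC.
rewrite !inE CU // (negbTE (noI s x sI xI)) (negbTE (noJ t x tJ xJ)) !orbF andbT.
by apply/norP; split; apply/eqP => ?; subst x;
  [move: (noJ s t xJ tJ) | move: (noI s t sI xI)]; rewrite est.
Qed.

Lemma meets_both_off_edge q q' : q \in F -> q' \in F -> q :&: q' = set0 ->
  exists s t, [/\ s \in U, t \in U, e s t &
    supported_in (U :\: (closed_nbhd s :|: closed_nbhd t)) (meets_both F q q')].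
Proof.
move=> Fq Fq' qq'0; have [s [t [sq tq' est]]] := disjoint_cores_edge Fq Fq' qq'0.
have [[_ _ /subsetP qU] [_ _ /subsetP q'U]] := (suppF Fq, suppF Fq').
exists s, t; split; [exact: qU | exact: q'U | exact: est |].
move=> C /setIdP[FC /andP[Cq Cq']]; have [C0 CK _] := suppF FC.
by split=> //; apply: core_avoids_edge FC Cq Cq' sq tq' est.
Qed.

End Supported.

Definition bi_induced (U : {set V}) (M : {set V * V}) : Prop :=
  {in M &, forall p q : V * V, [/\ p.1 \in U, q.2 \in U, e p.1 q.2 = (p == q) & p.1 != q.2]}.

Lemma bi_induced0 U : bi_induced U set0.
Proof. by move=> p q; rewrite inE. Qed.

Lemma bi_induced_extend U M s t : s \in U -> t \in U -> e s t ->
    bi_induced (U :\: (closed_nbhd s :|: closed_nbhd t)) M ->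
  bi_induced U ((s, t) |: M) /\ #|(s, t) |: M| = #|M|.+1.
Proof.
move=> sU tU est biM.
have far y : y \in U :\: (closed_nbhd s :|: closed_nbhd t) ->
    [/\ y \in U, ~~ e s y, ~~ e t y, s != y & y != t].
  by rewrite !inE !negb_or => /andP[/andP[/andP[ys -> ] /andP[yt ->]] ->]; rewrite eq_sym ys yt.
have stM : (s, t) \notin M.
  by apply/negP => Mst; have [/far[_ _ _ + _] _ _ _] := biM _ _ Mst Mst; rewrite eqxx.
split; last by rewrite cardsU1 stM.
move=> p q /setU1P[-> | Mp] /setU1P[-> | Mq] /=.
- by rewrite eqxx est; split=> //; apply: contraTneq est => ->; rewrite e_irr.
- have [_ /far[? /negbTE est2 _ ? _] _ _] := biM _ _ Mq Mq.
  by rewrite est2; split=> //; apply/esym/(contraNF _ stM) => /eqP ->.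
- have [/far[? _ /negbTE ets _ ?] _ _ _] := biM _ _ Mp Mp.
  by rewrite e_sym ets; split=> //; apply/esym/(contraNF _ stM) => /eqP <-.
- by have [/setDP[? _] /setDP[? _] ? ?] := biM _ _ Mp Mq.
Qed.

Lemma bi_induced_le_nu_bi M : bi_induced setT M -> #|M| <= nu_bi e.
Proof.
move=> biM; set k := #|M|.
pose u := [ffun i : 'I_k => (enum_val i).1].
pose v := [ffun i : 'I_k => (enum_val i).2].
have biMk i j := biM _ _ (enum_valP i) (enum_valP j).
have euv i j : e (u i) (v j) = (i == j).
  by rewrite !ffunE; have [_ _ -> _] := biMk i j; rewrite (inj_eq enum_val_inj).
have u_inj : injective u by move=> i j uij; apply/eqP; rewrite eq_sym -euv -uij euv.
have v_inj : injective v by move=> i j vij; apply/eqP; rewrite -euv -vij euv.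
have k_lt : k < #|V|.+1 by rewrite ltnS -{1}(card_ord k); apply: leq_card u_inj.
have bm : has_bi_matching e k.
  apply/existsP; exists u; apply/existsP; exists v; apply/and4P; split.
  - exact/injectiveP.
  - exact/injectiveP.
  - by apply/forallP => i; apply/forallP => j; rewrite !ffunE; have [] := biMk i j.
  - by apply/forallP => i; apply/forallP => j; rewrite euv.
exact: (@leq_bigmax_cond _ (fun t : 'I_#|V|.+1 => has_bi_matching e t) val (Ordinal k_lt) bm).
Qed.

Lemma hittingP F N :
  reflect (N \subset MIS e /\ {in F, forall C, N :&: C != set0}) (hitting e F N).
Proof. by apply: (iffP andP) => -[NM /forall_inP hitN]. Qed.

Lemma hitting_sub F F' N : F' \subset F -> hitting e F N -> hitting e F' N.
Proof. by move=> /subsetP F'F /hittingP[NM hitN]; apply/hittingP; split=> // C /F'F/hitN. Qed.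

Lemma hittingU F F' N N' :
  hitting e F N -> hitting e F' N' -> hitting e (F :|: F') (N :|: N').
Proof.
move=> /hittingP[NM hitN] /hittingP[N'M hitN']; apply/hittingP.
split=> [|C /setUP[/hitN | /hitN'] hitC]; first by rewrite subUset NM.
all: by rewrite setIUl setU_eq0 negb_and hitC ?orbT.
Qed.

Lemma hitting_bigcup (J : finType) (P : pred J) (Fs : J -> family) m :
    (forall j, P j -> exists2 N, hitting e (Fs j) N & #|N| <= m) ->
  exists2 N, hitting e (\bigcup_(j | P j) Fs j) N & #|N| <= #|P| * m.
Proof.
move=> hitFs.
pose Ns j := odflt set0 [pick N | hitting e (Fs j) N & #|N| <= m].
have NsP j : P j -> hitting e (Fs j) (Ns j) && (#|Ns j| <= m).
  move=> Pj; rewrite /Ns; case: pickP => [N -> // | noN].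
  by have [N hitN cardN] := hitFs j Pj; move: (noN N); rewrite hitN cardN.
exists (\bigcup_(j | P j) Ns j).
  apply/hittingP; split.
    by apply/bigcupsP => j /NsP/andP[/hittingP[]].
  move=> C /bigcupP[j Pj FjC]; have /andP[/hittingP[_ hitj] _] := NsP j Pj.
  case/set0Pn: (hitj C FjC) => I /setIP[NjI CI].
  by apply/set0Pn; exists I; rewrite inE CI andbT; apply/bigcupP; exists j.
apply: leq_trans (_ : \sum_(j | P j) #|Ns j| <= _).
  elim/big_ind2: _ => // [|A a B b Aa Bb]; first by rewrite cards0.
  exact: leq_trans (leq_card_setU _ _) (leq_add Aa Bb).
by rewrite -sum_nat_const; apply: leq_sum => j /NsP/andP[].
Qed.

Definition packing F Q : bool := (Q \subset F) && trivIset Q.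

Definition packing_number F : nat := \max_(Q | packing F Q) #|Q|.

Lemma packing_le_number F Q : packing F Q -> #|Q| <= packing_number F.
Proof. exact: leq_bigmax_cond. Qed.

Lemma max_packing_exists F : exists2 Q, packing F Q & #|Q| = packing_number F.
Proof.
have [|Q pQ maxQ] := @eq_bigmax_cond _ (packing F) (fun Q => #|Q|).
  apply/card_gt0P; exists set0; rewrite unfold_in /packing sub0set.
  by apply/trivIsetP => A B; rewrite inE.
by exists Q; last exact: esym maxQ.
Qed.

Lemma packing_sub F F' Q : F' \subset F -> packing F' Q -> packing F Q.
Proof. by move=> F'F /andP[QF' trQ]; rewrite /packing (subset_trans QF' F'F). Qed.

Lemma packing_number_sub F F' : F' \subset F -> packing_number F' <= packing_number F.
Proof.
by move=> F'F; apply/bigmax_leqP => Q /(packing_sub F'F)/packing_le_number.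
Qed.

Lemma packing_add F Q C : packing F Q -> C \in F -> C != set0 ->
  {in Q, forall q, [disjoint C & q]} -> packing F (C |: Q) /\ #|C |: Q| = #|Q|.+1.
Proof.
case/andP => QF trQ FC C0 CQ; split.
  rewrite /packing subUset sub1set FC QF; apply/trivIsetP => A B.
  move=> /setU1P[-> | QA] /setU1P[-> | QB] AB; first by rewrite eqxx in AB.
  - exact: CQ.
  - by rewrite disjoint_sym; apply: CQ.
  - exact: (trivIsetP trQ).
rewrite cardsU1; suff -> : C \notin Q by [].
by apply/negP => QC; move: (CQ C QC); rewrite -setI_eq0 setIid (negbTE C0).
Qed.

Lemma packing_number_le1_meeting F : set0 \notin F -> packing_number F <= 1 ->
  {in F &, forall C D, C :&: D != set0}.
Proof.
move=> F0 pnF C D FC FD; rewrite setI_eq0; apply/negP => CD.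
have pD : packing F [set D] by rewrite /packing sub1set FD trivIset1.
have C0 : C != set0 by apply: contraNneq F0 => <-.
have CD' : {in [set D], forall q, [disjoint C & q]} by move=> q /set1P ->.
have [pCD cardCD] := packing_add pD FC C0 CD'.
by have := leq_trans (packing_le_number pCD) pnF; rewrite cardCD cards1.
Qed.

Definition meets_only F Q q : family :=
  [set C in F | [forall q' in Q :\ q, C :&: q' == set0]].

Definition distinct_pairs Q (p : {set {set V}} * {set {set V}}) : bool :=
  [&& p.1 \in Q, p.2 \in Q & p.1 != p.2].

Lemma card_distinct_pairs Q : #|distinct_pairs Q| <= #|Q| * #|Q|.
Proof.
rewrite -cardsX; apply: subset_leq_card.
by apply/subsetP => -[q q'] /and3P[Qq Qq' _]; rewrite inE /= Qq Qq'.
Qed.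

Section MaximumPacking.
Variables (F Q : family).
Hypotheses (F0 : set0 \notin F) (pQ : packing F Q) (maxQ : #|Q| = packing_number F).

Lemma max_packing_meets C : C \in F -> exists2 q, q \in Q & C :&: q != set0.
Proof.
move=> FC; have [/exists_inP[q Qq Cq] | /exists_inPn freeC] :=
  boolP [exists q in Q, C :&: q != set0]; first by exists q.
have C0 : C != set0 by apply: contraNneq F0 => <-.
have CQ : {in Q, forall q, [disjoint C & q]}.
  by move=> q Qq; rewrite -setI_eq0; apply/negPn/freeC.
have [pCQ cardCQ] := packing_add pQ FC C0 CQ.
by have := packing_le_number pCQ; rewrite cardCQ -maxQ ltnn.
Qed.

Lemma max_packing_private q C D : q \in Q -> C \in F -> D \in F ->
    {in Q :\ q, forall q', [disjoint C & q']} -> {in Q :\ q, forall q', [disjoint D & q']} ->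
  C :&: D != set0.
Proof.
move=> Qq FC FD Cfree Dfree; rewrite setI_eq0; apply/negP => CD.
have [C0 D0] : C != set0 /\ D != set0 by split; apply: contraNneq F0 => <-.
have pQq : packing F (Q :\ q).
  by case/andP: pQ => QF trQ; rewrite /packing (subset_trans (subsetDl _ _) QF) trivIsetD.
have [pDQ cardDQ] := packing_add pQq FD D0 Dfree.
have CDQ : {in D |: (Q :\ q), forall q', [disjoint C & q']}.
  by move=> q' /setU1P[-> | /Cfree].
have [pCDQ cardCDQ] := packing_add pDQ FC C0 CDQ.
have := packing_le_number pCDQ; rewrite cardCDQ cardDQ -maxQ (cardsD1 q Q) Qq.
by rewrite add1n ltnS ltnn.
Qed.

Lemma meets_only_meeting q :
  q \in Q -> {in meets_only F Q q &, forall C D, C :&: D != set0}.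
Proof.
move=> Qq C D /setIdP[FC /forall_inP Cfree] /setIdP[FD /forall_inP Dfree].
apply: (max_packing_private Qq FC FD) => q' Qq'; rewrite -setI_eq0; [exact: Cfree | exact: Dfree].
Qed.

Lemma max_packing_cover :
  F \subset \bigcup_(q in Q) meets_only F Q q :|:
            \bigcup_(p | distinct_pairs Q p) meets_both F p.1 p.2.
Proof.
apply/subsetP => C FC; have [q Qq Cq] := max_packing_meets FC.
have [/exists_inP[q' /setD1P[q'q Qq'] Cq'] | /exists_inPn Conly] :=
  boolP [exists q' in Q :\ q, C :&: q' != set0].
  apply/setUP; right; apply/bigcupP; exists (q, q'); last by rewrite inE FC Cq Cq'.
  by rewrite /distinct_pairs /= Qq Qq' eq_sym q'q.
apply/setUP; left; apply/bigcupP; exists q => //.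
by rewrite inE FC; apply/forall_inP => q' /Conly/negPn.
Qed.

End MaximumPacking.

Lemma hitting_step U F W m : supported_in U F -> packing_number F <= W ->
    (forall s t, s \in U -> t \in U -> e s t ->
     forall F', supported_in (U :\: (closed_nbhd s :|: closed_nbhd t)) F' ->
     packing_number F' <= W -> exists2 N, hitting e F' N & #|N| <= m) ->
  exists2 N, hitting e F N & #|N| <= W + W * W * m.
Proof.
move=> suppF pnF hitRestricted.
have F0 : set0 \notin F by apply/negP => /suppF[]; rewrite eqxx.
have [Q pQ maxQ] := max_packing_exists F; have /andP[QF trQ] := pQ.
have QW : #|Q| <= W by rewrite maxQ.
have [N1 hitN1 cardN1] :
    exists2 N, hitting e (\bigcup_(q in Q) meets_only F Q q) N & #|N| <= #|Q| * 1.
  apply: hitting_bigcup => q Qq.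
  apply: meeting_family_hit1 (meets_only_meeting F0 pQ maxQ Qq).
  by apply: supported_sub suppF; apply/subsetP => C /setIdP[].
have [N2 hitN2 cardN2] :
    exists2 N, hitting e (\bigcup_(p | distinct_pairs Q p) meets_both F p.1 p.2) N &
               #|N| <= #|distinct_pairs Q| * m.
  apply: hitting_bigcup => -[q q'] /and3P[/= Qq Qq' qq'].
  have [Fq Fq'] := (subsetP QF q Qq, subsetP QF q' Qq').
  have /eqP qq'0 : q :&: q' == set0 by rewrite setI_eq0; apply: (trivIsetP trQ).
  have [s [t [sU tU est suppB]]] := meets_both_off_edge suppF Fq Fq' qq'0.
  apply: (hitRestricted s t sU tU est _ suppB).
  by apply: leq_trans pnF; apply: packing_number_sub; apply/subsetP => C /setIdP[].
exists (N1 :|: N2).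
  exact: hitting_sub (max_packing_cover F0 pQ maxQ) (hittingU hitN1 hitN2).
have pairsW := leq_trans (card_distinct_pairs Q) (leq_mul QW QW).
apply: leq_trans (leq_card_setU _ _) (leq_add _ _).
  by rewrite (leq_trans cardN1) ?muln1.
by rewrite (leq_trans cardN2) ?leq_mul2r ?pairsW ?orbT.
Qed.

Fixpoint hit_bound (W n : nat) : nat :=
  if n is n'.+1 then W + W * W * hit_bound W n' else 1.

Lemma hit_bound_le W n : 0 < W -> hit_bound W n <= (2 * W * W) ^ n.
Proof.
move=> W_gt0; elim: n => [|n IH] //=; rewrite expnS.
have : 0 < (2 * W * W) ^ n by rewrite expn_gt0 !muln_gt0 W_gt0.
nia.
Qed.

Lemma hitting_le_hit_bound W n U F : (forall M, bi_induced U M -> #|M| <= n) ->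
    supported_in U F -> packing_number F <= W ->
  exists2 N, hitting e F N & #|N| <= hit_bound W n.
Proof.
elim: n U F => [|n IH] U F biU suppF pnF /=.
  apply: (meeting_family_hit1 suppF) => C D FC FD; apply/eqP => CD.
  have [s [t [sC tD est]]] := disjoint_cores_edge suppF FC FD CD.
  have [[_ _ /subsetP CU] [_ _ /subsetP DU]] := (suppF C FC, suppF D FD).
  have [biM cardM] := bi_induced_extend (CU s sC) (DU t tD) est (bi_induced0 _).
  by have := biU _ biM; rewrite cardM cards0.
apply: (hitting_step suppF pnF) => s t sU tU est F' suppF' pnF'.
apply: (IH _ _ _ suppF' pnF') => M biM; have [biM' cardM'] := bi_induced_extend sU tU est biM.
by have := biU _ biM'; rewrite cardM'.
Qed.

Lemma tauG_le_card F N : hitting e F N -> tauG e F <= #|N|.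
Proof. by move=> hitN; apply: (@bigmin_le_cond _ nat _ #|MIS e| N (hitting e F)). Qed.

End MaximalIndependentSets.

Local Open Scope ring_scope.

Lemma ln_ge_half (R : realType) (x : R) : 2 <= x -> 2^-1 <= ln x.
Proof.
move=> x_ge2; have x_gt0 : 0 < x by lra.
have : x^-1 <= 2^-1 by rewrite lef_pV2 ?posrE //; lra.
have := expR_ge1Dx (- ln x); rewrite expRN lnK ?posrE //.
lra.
Qed.

Lemma one_le_powR_ln (R : realType) (n : nat) (x : R) :
  1 <= x -> 1 <= (480 * x) `^ (8 * n%:R * ln x).
Proof.
move=> x_ge1; rewrite -[X in X <= _](powRr0 (480 * x)); apply: ler_powR; first lra.
by rewrite !mulr_ge0 ?ln_ge0.
Qed.

Lemma hit_bound_le_powR (R : realType) (W n : nat) (x : R) :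
  (2 <= W)%N -> W%:R <= x -> (hit_bound W n)%:R <= (480 * x) `^ (8 * n%:R * ln x).
Proof.
move=> W_ge2 Wx; have x_ge2 : 2 <= x by apply: le_trans Wx; rewrite ler_nat.
apply: (@le_trans _ _ ((2 * W * W) ^ n)%N%:R).
  by rewrite ler_nat; apply: hit_bound_le; apply: leq_trans W_ge2.
rewrite natrX !natrM -mulrA -expr2 mulrAC powRrM powR_mulrn ?powR_ge0 //.
apply: lerXn2r; rewrite ?nnegrE ?powR_ge0 ?mulr_ge0 ?exprn_ge0 //.
have ln_x := ln_ge_half x_ge2; have W_ge0 : 0 <= W%:R :> R := ler0n _ _.
apply: (@le_trans _ _ ((480 * x) `^ 2%:R)); first by rewrite powR_mulrn; [nra | lra].
apply: ler_powR; lra.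
Qed.

Section Nets.
Variables (V : finType) (e : rel V) (R : realType).
Hypotheses (e_sym : symmetric e) (e_irr : irreflexive e).
Implicit Types (F Q : {set {set {set V}}}).

Lemma packing_weight (f : {set V} -> R) Q : (forall I, 0 <= f I) -> packing (CG e) Q ->
  \sum_(C in Q) \sum_(I in C) f I <= \sum_(I in MIS e) f I.
Proof.
move=> f_ge0 /andP[QCG trQ]; rewrite -(big_trivIset _ trQ).
have coverQ : cover Q \subset MIS e.
  by apply/bigcupsP => C /(subsetP QCG)/CG_sub_MIS.
rewrite [leRHS](big_setID (cover Q)) /= (setIidPr coverQ) lerDl.
exact: sumr_ge0.
Qed.

Lemma packing_le_inv (mu : {set V} -> R) (eps : R) : prob_on_MIS e mu -> 0 < eps ->
  forall Q, packing [set C in CG e | eps <= measure_of mu C] Q -> #|Q|%:R <= eps^-1.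
Proof.
move=> [mu_ge0 [_ mu1]] eps_gt0 Q pQ; have /andP[/subsetP QF _] := pQ.
rewrite -(ler_pM2r eps_gt0) mulVf ?gt_eqF // -[leRHS]mu1 mulr_natl -sumr_const.
apply: le_trans (packing_weight mu_ge0 (packing_sub _ pQ)); last first.
  by apply/subsetP => C /setIdP[].
by apply: ler_sum => C /QF/setIdP[].
Qed.

Lemma packing_le_tau_star F : F \subset CG e -> set0 \notin F -> forall Q, packing F Q ->
  #|Q|%:R <= tau_starG e R F.
Proof.
move=> FCG F0 Q pQ; have /andP[/subsetP QF _] := pQ.
apply: lb_le_inf.
  exists (\sum_(I in MIS e) 1), (fun _ => 1); split=> //; split=> [I | C FC]; first lra.
  by rewrite sumr_const ler1n card_gt0; apply: contraNneq F0 => <-.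
move=> _ [f [[f01 fF] ->]].
have f_ge0 I : 0 <= f I by case/andP: (f01 I).
apply: le_trans (packing_weight f_ge0 (packing_sub FCG pQ)).
by rewrite -[leLHS]mulr1 mulr_natl -sumr_const; apply: ler_sum => C /QF/fF.
Qed.

Lemma hitting_le_powR (x : R) F : F \subset CG e -> set0 \notin F ->
    (forall Q, packing F Q -> #|Q|%:R <= x) ->
  exists2 N, hitting e F N & #|N|%:R <= (480 * x) `^ (8 * (nu_bi e)%:R * ln x).
Proof.
move=> FCG F0 packF_le; have suppF := supported_in_CG FCG F0.
have [-> | /set0Pn[C FC]] := eqVneq F set0.
  exists set0; last by rewrite cards0 powR_ge0.
  by apply/hittingP; split=> [|C]; rewrite ?sub0set ?inE.
have [Q pQ maxQ] := max_packing_exists F; have Qx := packF_le Q pQ.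
have Q_ge1 : (1 <= #|Q|)%N.
  by rewrite maxQ -(cards1 C) packing_le_number // /packing sub1set FC trivIset1.
have [Q_le1 | Q_gt1] := leqP #|Q| 1.
  have meetF : {in F &, forall C D, C :&: D != set0}.
    by apply: (packing_number_le1_meeting F0); rewrite -maxQ.
  have [N hitN cardN] := meeting_family_hit1 suppF meetF; exists N => //.
  apply: le_trans (one_le_powR_ln _ _); first by rewrite lern1.
  by apply: le_trans Qx; rewrite ler1n.
have [N hitN cardN] := hitting_le_hit_bound e_sym e_irr
  (@bi_induced_le_nu_bi _ e) suppF (eq_leq (esym maxQ)).
exists N => //; apply: le_trans (hit_bound_le_powR _ Q_gt1 Qx); by rewrite ler_nat.
Qed.

End Nets.

Unset Implicit Arguments.

Theorem theorem2p28 (R : realType) (V : finType) (e : rel V)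
    (e_sym : symmetric e) (e_irr : irreflexive e) :
  (forall eps : R, 0 < eps ->
     has_weak_nets e eps
       ((480 / eps) `^ (8 * (nu_bi e)%:R * ln (1 / eps))))
  /\
  (forall F : {set {set {set V}}},
     F \subset CG e -> F != finset.set0 -> finset.set0 \notin F ->
     ((tauG e F)%:R : R) <=
       (480 * tau_starG e R F) `^ (8 * (nu_bi e)%:R * ln (tau_starG e R F))).
Proof.
split=> [eps eps_gt0 mu muP | F FCG _ F0].
- pose F := [set C in CG e | eps <= measure_of mu C].
  have FCG : F \subset CG e by apply/subsetP => C /setIdP[].
  have F0 : set0 \notin F by rewrite inE /measure_of big_set0 lt_geF ?andbF.
  have [N /hittingP[NM hitN] cardN] :=
    hitting_le_powR e_sym e_irr FCG F0 (packing_le_inv muP eps_gt0).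
  exists N; split; last by rewrite mul1r.
  by split=> // C CGC Cmu; apply: hitN; rewrite inE CGC.
- have [N hitN cardN] :=
    hitting_le_powR e_sym e_irr FCG F0 (packing_le_tau_star R FCG F0).
  by apply: le_trans cardN; rewrite ler_nat tauG_le_card.
Qed.
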